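(* Let $(X,U)$ be a measurable space, $\mu:U\to B_2$ a measure, and $U'$ the set of measurable functions $X\to B_2$. Consider the map $U'\to B_2$, $f\mapsto\int f\,d\mu=\mu(\mathrm{supp}\,f)$. Then: (a) this map is linear (over $B_2$), i.e. $\int(f\oplus g)\,d\mu=\int f\,d\mu\oplus\int g\,d\mu$ and $\int (c\cdot f)\,d\mu=c\cdot\int f\,d\mu$ for $f,g\in U'$, $c\in B_2$; (b) if $f_n,f\in U'$ ($n\in\mathbb N$) and $f_n$ converges monotonously to $f$, then the binary sequence $\int f_n\,d\mu$ converges to $\int f\,d\mu$; (c) for $f,g\in U'$: $f=g$ almost everywhere if and only if $\int f\,d\mu=\int g\,d\mu$.
   Context: $B_2=\{0,1\}$, $\oplus$ addition modulo 2; functions $X\to B_2$ are added and multiplied by scalars pointwise. A measurable space $(X,U)$: $U\subset2^X$ non-empty, closed under $\Delta$ and $\cap$. $f:X\to B_2$ is measurable if $\mathrm{supp}\,f=\{x:f(x)=1\}\in U$. $\mu:U\to B_2$ is a measure if for every sequence of pairwise disjoint sets of $U$ whose union is in $U$, only finitely many have $\mu$-value 1 and $\mu$ of the union is their number modulo 2. $f_n$ converges monotonously to $f$ if either $\mathrm{supp}\,f_0\subset\mathrm{supp}\,f_1\subset\cdots$ with $\bigcup_n\mathrm{supp}\,f_n=\mathrm{supp}\,f$, or $\mathrm{supp}\,f_0\supset\mathrm{supp}\,f_1\supset\cdots$ with $\bigcap_n\mathrm{supp}\,f_n=\mathrm{supp}\,f$. A binary sequence $(x_n)$ converges to $x_0$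 if $x_n=x_0$ for all sufficiently large $n$. $f=g$ almost everywhere means $\mu(\{x:f(x)\neq g(x)\})=0$. *)

From mathcomp Require Import all_boot.
From mathcomp Require Import boolp classical_sets.
Set Implicit Arguments. Unset Strict Implicit. Unset Printing Implicit Defensive.
Local Open Scope classical_set_scope.

(* B_2 = bool, addition mod 2 = addb (xor), multiplication = andb. *)

Definition symdiff {X : Type} (A B : set X) : set X := (A `\` B) `|` (B `\` A).

Definition is_measurable_space {X : Type} (U : set (set X)) : Prop :=
  (exists A, U A) /\
  (forall A B, U A -> U B -> U (symdiff A B)) /\
  (forall A B, U A -> U B -> U (A `&` B)).

(* mu : U -> B_2 is a measure (values of mu outside U are irrelevant):
   for every sequence of pairwise disjoint sets of U whose union is in U,
   only finitely many have mu-value 1 (all have value 0 from index N on),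
   and mu of the union is their number modulo 2. *)
Definition is_B2_measure {X : Type} (U : set (set X)) (mu : set X -> bool) : Prop :=
  forall A : nat -> set X,
    (forall n, U (A n)) ->
    (forall i j, i <> j -> A i `&` A j = set0) ->
    U (\bigcup_n A n) ->
    exists N : nat,
      (forall n, (N <= n)%N -> mu (A n) = false) /\
      mu (\bigcup_n A n) = \big[addb/false]_(n < N) mu (A n).

Definition supp {X : Type} (f : X -> bool) : set X := [set x | f x = true].

Definition measurable_B2 {X : Type} (U : set (set X)) (f : X -> bool) : Prop :=
  U (supp f).

Definition integral_B2 {X : Type} (mu : set X -> bool) (f : X -> bool) : bool :=
  mu (supp f).

Definition converges_monotonously {X : Type} (fn : nat -> X -> bool) (f : X -> bool) : Prop :=
  ((forall n, supp (fn n) `<=` supp (fn n.+1)) /\ \bigcup_n supp (fn n) = supp f) \/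
  ((forall n, supp (fn n.+1) `<=` supp (fn n)) /\ \bigcap_n supp (fn n) = supp f).

Definition binary_converges (x : nat -> bool) (x0 : bool) : Prop :=
  exists N, forall n, (N <= n)%N -> x n = x0.

Definition ae_eq_B2 {X : Type} (mu : set X -> bool) (f g : X -> bool) : Prop :=
  mu [set x | f x <> g x] = false.

(* The integral of f is mu (supp f), and supp (f (+) g) is the symmetric
   difference of the supports, so everything reduces to properties of mu.
   Countable additivity applied to sequences that are eventually empty gives
   finite additivity, hence mu (A `+` B) = mu A (+) mu B; this is (a), and
   also (c) since f = g a.e. means mu (supp f `+` supp g) = 0.  For (b), an
   increasing sequence A is cut into the disjoint differences
   D (n+1) = A (n+1) `\` A n: mu (A n) is a partial sum of the mu (D k), whose
   terms vanish eventually by the measure axiom; a decreasing sequence is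
   reduced to the increasing one A 0 `\` A n. *)
From mathcomp Require Import all_boot.
From mathcomp Require Import boolp classical_sets.
Set Implicit Arguments. Unset Strict Implicit. Unset Printing Implicit Defensive.
Local Open Scope classical_set_scope.

Lemma big_ord_idx_tail (R : Type) (idx : R) (op : Monoid.law idx)
    (F : nat -> R) (K M : nat) :
  (K <= M)%N -> (forall n, (K <= n)%N -> F n = idx) ->
  \big[op/idx]_(n < M) F n = \big[op/idx]_(n < K) F n.
Proof.
move=> KM F_tail; rewrite (big_ord_widen M F KM) [RHS]big_mkcond.
by apply: eq_bigr => i _; case: ltnP => // /F_tail.
Qed.

Lemma supp_addb (X : Type) (f g : X -> bool) :
  supp (fun x => f x (+) g x) = supp f `+` supp g.
Proof.
by apply/seteqP; split => x; rewrite /supp /=; case: (f x); case: (g x); intuition.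
Qed.

Lemma supp_false (X : Type) : supp (fun _ : X => false) = set0.
Proof. by apply/seteqP; split => x. Qed.

Lemma neq_set_supp_addb (X : Type) (f g : X -> bool) :
  [set x | f x <> g x] = supp (fun x => f x (+) g x).
Proof.
by apply/seteqP; split => x; rewrite /supp /=; case: (f x); case: (g x); intuition.
Qed.

Section RingOfSets.
Variables (X : Type) (U : set (set X)).
Hypothesis hU : is_measurable_space U.

(* [symdiff] of the definitions is by definition [setY] of classical_sets. *)
Lemma ring_setY A B : U A -> U B -> U (A `+` B).
Proof. by case: hU => _ [UY _]; exact: UY. Qed.

Lemma ring_setI A B : U A -> U B -> U (A `&` B).
Proof. by case: hU => _ [_ UI]; exact: UI. Qed.

Lemma ring_set0 : U set0.
Proof. by case: hU => -[A UA] _; rewrite -(setYK A); exact: ring_setY. Qed.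

Lemma ring_setD A B : U A -> U B -> U (A `\` B).
Proof. by move=> UA UB; rewrite -setYD; apply: ring_setY => //; exact: ring_setI. Qed.

Lemma ring_setU A B : U A -> U B -> U (A `|` B).
Proof.
by move=> UA UB; rewrite -setYU; apply: ring_setY; [exact: ring_setY|exact: ring_setI].
Qed.

End RingOfSets.

Section B2Measure.
Variables (X : Type) (U : set (set X)) (mu : set X -> bool).
Hypotheses (hU : is_measurable_space U) (hmu : is_B2_measure U mu).

Lemma measure_set0 : mu set0 = false.
Proof.
have Ucup : U (\bigcup_(n : nat) set0).
  by rewrite bigcup_const; [exact: ring_set0|exists 0%N].
have [N [N_tail _]] :=
  hmu (A := fun=> set0) (fun=> ring_set0 hU) (fun _ _ _ => setI0 _) Ucup.
exact: N_tail.
Qed.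

Lemma measure_finite_additive (A : nat -> set X) (K : nat) :
  (forall n, U (A n)) -> (forall i j, i <> j -> A i `&` A j = set0) ->
  (forall n, (K <= n)%N -> A n = set0) -> U (\bigcup_n A n) ->
  mu (\bigcup_n A n) = \big[addb/false]_(n < K) mu (A n).
Proof.
move=> UA disjA A_tail Ucup.
have [N [N_tail ->]] := hmu UA disjA Ucup.
rewrite -(big_ord_idx_tail _ (leq_maxl N K) N_tail).
rewrite (big_ord_idx_tail (F := fun n => mu (A n)) _ (leq_maxr N K)) // => n /A_tail ->.
exact: measure_set0.
Qed.

Lemma measure_setU A B : U A -> U B -> A `&` B = set0 ->
  mu (A `|` B) = mu A (+) mu B.
Proof.
move=> UA UB AB0; rewrite -bigcup2E (measure_finite_additive (K := 2)).
- by rewrite !big_ord_recl big_ord0 addbF.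
- by case=> [|[|n]] //=; exact: ring_set0.
- by move: AB0; rewrite trivIset_bigcup2 => /trivIsetP AB0 i j /eqP; exact: AB0.
- by case=> [|[|n]].
- by rewrite bigcup2E; exact: ring_setU.
Qed.

Lemma measure_setID A B : U A -> U B -> mu A = mu (A `&` B) (+) mu (A `\` B).
Proof.
move=> UA UB; rewrite -measure_setU ?setUIDK //.
- exact: ring_setI.
- exact: ring_setD.
- by apply/seteqP; split => x // [[_ Bx] [_]].
Qed.

Lemma measure_setY A B : U A -> U B -> mu (A `+` B) = mu A (+) mu B.
Proof.
move=> UA UB; rewrite (measure_setID UA UB) (measure_setID UB UA) [B `&` A]setIC.
rewrite /setY measure_setU; try exact: ring_setD.
- by rewrite addbACA addbb.
- by apply/seteqP; split => x // [[Ax _] [_]].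
Qed.

Lemma measure_setD A C : U A -> U C -> C `<=` A -> mu (A `\` C) = mu A (+) mu C.
Proof.
move=> UA UC CA; rewrite -{2}(setIidr CA) -setYD measure_setY //.
exact: ring_setI.
Qed.

Lemma measure_nondecreasing_cvg (A : nat -> set X) :
  (forall n, U (A n)) -> (forall n, A n `<=` A n.+1) -> U (\bigcup_n A n) ->
  binary_converges (fun n => mu (A n)) (mu (\bigcup_n A n)).
Proof.
move=> UA incA Ucup.
have le_A i j : (i <= j)%N -> A i `<=` A j.
  exact: (homo_leq (@subset_refl X) (fun _ _ _ => @subset_trans _ _ _ _)).
pose D n := if n is k.+1 then A n `\` A k else A 0%N.
have UD n : U (D n) by case: n => [|n] /=; [exact: UA|exact: ring_setD].
have D_sub n : D n `<=` A n by case: n => [|n] // x [].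
have disjD_lt i j : (i < j)%N -> D i `&` D j = set0.
  case: j => [//|j] ij; apply/disjoints_subset => x /D_sub /(le_A i j ij) Ajx.
  by move=> [_]; apply.
have disjD i j : i <> j -> D i `&` D j = set0.
  move=> /eqP; rewrite neq_ltn => /orP[/disjD_lt //|/disjD_lt].
  by rewrite setIC.
have A_sub_cupD n : A n `<=` \bigcup_k D k.
  elim: n => [|n IH] x Anx; first by exists 0%N.
  by have [/IH //|nAnx] := pselect (A n x); exists n.+1.
have cupD : \bigcup_n D n = \bigcup_n A n.
  apply/seteqP; split => x [n _]; last exact: A_sub_cupD.
  by move/D_sub; exists n.
have partial_sum n : mu (A n) = \big[addb/false]_(k < n.+1) mu (D k).
  elim: n => [|n IH]; first by rewrite big_ord_recl big_ord0 addbF.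
  rewrite big_ord_recr -IH /= -{1}(setDUK (incA n)) measure_setU ?setDIK //.
  exact: ring_setD.
rewrite -cupD in Ucup *.
have [N [N_tail ->]] := hmu UD disjD Ucup.
by exists N => n Nn; rewrite partial_sum (big_ord_idx_tail _ (leqW Nn) N_tail).
Qed.

Lemma measure_nonincreasing_cvg (A : nat -> set X) :
  (forall n, U (A n)) -> (forall n, A n.+1 `<=` A n) -> U (\bigcap_n A n) ->
  binary_converges (fun n => mu (A n)) (mu (\bigcap_n A n)).
Proof.
move=> UA decA Ucap.
have le_A i j : (i <= j)%N -> A j `<=` A i.
  apply: (homo_leq (r := fun B C : set X => C `<=` B)) => [B|B C D CB DC|//].
    exact: subset_refl.
  exact: subset_trans DC CB.
have cupB : \bigcup_n (A 0%N `\` A n) = A 0%N `\` \bigcap_n A n.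
  by rewrite setDE setC_bigcap setI_bigcupr.
have UB n : U (A 0%N `\` A n) by exact: ring_setD.
have incB n : A 0%N `\` A n `<=` A 0%N `\` A n.+1 by exact: setDS.
have Ucup : U (\bigcup_n (A 0%N `\` A n)) by rewrite cupB; exact: ring_setD.
have [N N_eq] := measure_nondecreasing_cvg UB incB Ucup.
exists N => n /N_eq; rewrite cupB !measure_setD //.
- exact: addbI.
- exact: bigcap_inf.
- exact: le_A.
Qed.

End B2Measure.

Section B2Integral.
Variables (X : Type) (U : set (set X)) (mu : set X -> bool).
Hypotheses (hU : is_measurable_space U) (hmu : is_B2_measure U mu).

Lemma measurable_B2_addb f g : measurable_B2 U f -> measurable_B2 U g ->
  measurable_B2 U (fun x => f x (+) g x).
Proof. by rewrite /measurable_B2 supp_addb; exact: ring_setY. Qed.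

Lemma integral_B2_addb f g : measurable_B2 U f -> measurable_B2 U g ->
  integral_B2 mu (fun x => f x (+) g x) = integral_B2 mu f (+) integral_B2 mu g.
Proof. by rewrite /integral_B2 supp_addb; exact: measure_setY. Qed.

Lemma measurable_B2_andb c f : measurable_B2 U f ->
  measurable_B2 U (fun x => c && f x).
Proof. by case: c => //= _; rewrite /measurable_B2 supp_false; exact: ring_set0. Qed.

Lemma integral_B2_andb c f :
  integral_B2 mu (fun x => c && f x) = c && integral_B2 mu f.
Proof. by case: c => //=; rewrite /integral_B2 supp_false; exact: measure_set0 hU hmu. Qed.

Lemma integral_B2_monotone_cvg (fn : nat -> X -> bool) f :
  (forall n, measurable_B2 U (fn n)) -> measurable_B2 U f ->
  converges_monotonously fn f ->
  binary_converges (fun n => integral_B2 mu (fn n)) (integral_B2 mu f).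
Proof.
rewrite /measurable_B2 /integral_B2 => Ufn Uf [[inc cup]|[dec cap]].
- by rewrite -cup in Uf *; exact: measure_nondecreasing_cvg hU hmu _ Ufn inc Uf.
- by rewrite -cap in Uf *; exact: measure_nonincreasing_cvg hU hmu _ Ufn dec Uf.
Qed.

Lemma ae_eq_B2P f g : measurable_B2 U f -> measurable_B2 U g ->
  ae_eq_B2 mu f g <-> integral_B2 mu f = integral_B2 mu g.
Proof.
move=> Uf Ug; rewrite /ae_eq_B2 neq_set_supp_addb.
rewrite [mu _](integral_B2_addb Uf Ug).
by case: (integral_B2 mu f); case: (integral_B2 mu g).
Qed.

End B2Integral.

Theorem proposition7p9 (X : Type) (U : set (set X)) (mu : set X -> bool)
  (hU : is_measurable_space U) (hmu : is_B2_measure U mu) :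
  (* (a) linearity on U' *)
  (forall f g : X -> bool, measurable_B2 U f -> measurable_B2 U g ->
     measurable_B2 U (fun x => addb (f x) (g x)) /\
     integral_B2 mu (fun x => addb (f x) (g x)) =
       addb (integral_B2 mu f) (integral_B2 mu g)) /\
  (forall (c : bool) (f : X -> bool), measurable_B2 U f ->
     measurable_B2 U (fun x => c && f x) /\
     integral_B2 mu (fun x => c && f x) = c && integral_B2 mu f) /\
  (* (b) monotone convergence *)
  (forall (fn : nat -> X -> bool) (f : X -> bool),
     (forall n, measurable_B2 U (fn n)) -> measurable_B2 U f ->
     converges_monotonously fn f ->
     binary_converges (fun n => integral_B2 mu (fn n)) (integral_B2 mu f)) /\
  (* (c) a.e. equality *)
  (forall f g : X -> bool, measurable_B2 U f -> measurable_B2 U g ->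
     (ae_eq_B2 mu f g <-> integral_B2 mu f = integral_B2 mu g)).
Proof.
split; [|split; [|split]].
- move=> f g Uf Ug; split; first exact: measurable_B2_addb hU _ _ Uf Ug.
  exact: integral_B2_addb hU hmu _ _ Uf Ug.
- move=> c f Uf; split; first exact: measurable_B2_andb hU c _ Uf.
  exact: integral_B2_andb hU hmu c f.
- exact: integral_B2_monotone_cvg hU hmu.
- exact: ae_eq_B2P hU hmu.
Qed.
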